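(* Let $\mu\in\mathsf{Form}_{\mathcal L}$ and let $\mathcal M=(S,E,\mathrm{Val})$ be a playable $Ł_n$-model. If $\mathcal M^*=(|S|,E^*,\mathrm{Val}^* )$ is an intermediate $\mathrm{Cl}(\mu)$-filtration of $\mathcal M$, then for every $u\in S$ the restriction $E^*(|u|)^\sharp$ of $E^*(|u|)$ to $\mathcal P N\times Ł_1^{|S|}$ is a playable Boolean effectivity function.
   Context: $Ł_n=\{0,\frac1n,\dots,1\}$ with $\neg x=1-x$, $x\oplus y=\min(x+y,1)$, $x\odot y=\max(x+y-1,0)$, $x\to y=\min(1,1-x+y)$, $\wedge=\min$, $\vee=\max$, applied pointwise to functions; $Ł_1^X=\{0,1\}^X$. $N$ is a finite set of players, $|N|\ge2$, $\overline C=N\setminus C$. An $Ł_n$-valued effectivity function on a set $X$ is a map $E:\mathcal P N\times Ł_n^X\to Ł_n$ (Boolean when $n=1$). It is: outcome monotonic if $f\ge g$ implies $E(C,f)\ge E(C,g)$; $N$-maximal if $\neg E(\varnothing,\neg f)\le E(N,f)$; superadditive if $E(C_1,f)\wedge E(C_2,g)\le E(C_1\cup C_2,f\wedge g)$ whenever $C_1\cap C_2=\varnothing$; homogeneous if $E(C,f\oplus f)=E(C,f)\oplus E(C,f)$ and $E(C,f\odot f)=E(C,f)\odot E(C,f)$; has liveness if $E(C,1)=1$ for all $C$; has safety if $E(C,0)=0$ for all $C$. Playable: all six properties. Formulas of $\mathcal L$: $\phi::=1\mid p\mid\phi\to\phi\mid\neg\phi\mid[C]\phi$ ($p$ in a countably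 infinite set $\mathsf{Prop}$, $C\subseteq N$); $\mathsf{Form}_{\mathcal L}$ is the set of formulas; abbreviations $0=\neg1$, $\phi\oplus\psi=\neg\phi\to\psi$, $\phi\odot\psi=\neg(\phi\to\neg\psi)$, $\phi\wedge\psi=\phi\odot(\phi\to\psi)$. $\mathrm{Cl}(\mu)$ is the closure of the set of subformulas of $\mu$ under $\neg$ and $\to$. An $Ł_n$-model $(S,E,\mathrm{Val})$: $S\ne\varnothing$, $E(u)$ an $Ł_n$-valued effectivity function on $S$ for each $u$, $\mathrm{Val}:S\times\mathsf{Prop}\to Ł_n$ extended by the Łukasiewicz operations and $\mathrm{Val}(u,[C]\phi)=E(u)(C,\mathrm{Val}(-,\phi))$; it is playable if every $E(u)$ is playable. For $\Gamma$ a set of formulas closed under subformulas and $\phi\mapsto\phi\oplus\phi$, $\phi\mapsto\phi\odot\phi$: $u\equiv_\Gamma v$ iff $\mathrm{Val}(u,\phi)=\mathrm{Val}(v,\phi)$ for all $\phi\in\Gamma$; $|S|$ is the set of classes; $|\mathrm{Val}(-,\phi)|(|u|)=\mathrm{Val}(u,\phi)$. A $\Gamma$-filtration is an $Ł_n$-model $(|S|,E^*,\mathrm{Val}^* )$ with $\mathrm{Val}^*(|u|,p)=\mathrm{Val}(u,p)$ for $p\in\Gamma$ and $E(u)(C,\mathrm{Val}(-,\phi))=E^*(|u|)(C,|\mathrm{Val}(-,\phi)|)$ for all $C$, $\phi\in\Gamma$. It is an intermediate $\Gamma$-filtration of a playable $\mathcal M$ if moreover, for every $u$, $f\in Ł_n^{|S|}$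 and proper coalition $C\ne N$, $E^*(|u|)(C,f)=\max\{E(u)(C,\mathrm{Val}(-,\phi))\mid\phi\in\Gamma,\ |\mathrm{Val}(-,\phi)|\le f\}$, and $E^*(|u|)(N,f)=\neg E^*(|u|)(\varnothing,\neg f)$. *)

From mathcomp Require Import all_boot.
Set Implicit Arguments. Unset Strict Implicit. Unset Printing Implicit Defensive.

(* Ł_m = {0, 1/m, ..., 1} is encoded as 'I_m.+1 : the ordinal k stands for k/m. *)
Definition luk (m : nat) := 'I_m.+1.

Section Luk.
Variable m : nat.
Definition lzero : luk m := ord0.
Definition lone : luk m := ord_max.
Definition lneg (x : luk m) : luk m := inord (m - x).
Definition loplus (x y : luk m) : luk m := inord (minn (x + y) m).
Definition lodot (x y : luk m) : luk m := inord (x + y - m).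
Definition limp (x y : luk m) : luk m := inord (minn m (m - x + y)).
Definition lmin (x y : luk m) : luk m := if (x <= y)%N then x else y.
Definition lmax (x y : luk m) : luk m := if (x <= y)%N then y else x.
End Luk.

Definition eff (N : finType) (X : Type) (m : nat) := {set N} -> (X -> luk m) -> luk m.

Section Playable.
Variables (N : finType) (X : Type) (m : nat) (E : eff N X m).
Definition outcome_monotonic := forall C (f g : X -> luk m),
  (forall x, g x <= f x)%N -> (E C g <= E C f)%N.
Definition N_maximal := forall f : X -> luk m,
  (lneg (E set0 (fun x => lneg (f x))) <= E setT f)%N.
Definition superadditive := forall (C1 C2 : {set N}) (f g : X -> luk m),
  [disjoint C1 & C2] ->
  (lmin (E C1 f) (E C2 g) <= E (C1 :|: C2) (fun x => lmin (f x) (g x)))%N.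
Definition homogeneous := forall C (f : X -> luk m),
  E C (fun x => loplus (f x) (f x)) = loplus (E C f) (E C f) /\
  E C (fun x => lodot (f x) (f x)) = lodot (E C f) (E C f).
Definition liveness := forall C, E C (fun _ => lone m) = lone m.
Definition safety := forall C, E C (fun _ => lzero m) = lzero m.
Definition playable := outcome_monotonic /\ N_maximal /\ superadditive /\
  homogeneous /\ liveness /\ safety.
End Playable.

Inductive form (N : finType) : Type :=
| F1 : form N
| Fvar : nat -> form N
| Fimp : form N -> form N -> form N
| Fneg : form N -> form N
| Fbox : {set N} -> form N -> form N.

Arguments F1 {N}.
Arguments Fvar {N} _.
Arguments Fimp {N} _ _.
Arguments Fneg {N} _.
Arguments Fbox {N} _ _.

Inductive subform (N : finType) : form N -> form N -> Prop :=
| sub_refl phi : subform phi phi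
| sub_imp_l phi psi chi : subform phi psi -> subform phi (Fimp psi chi)
| sub_imp_r phi psi chi : subform phi chi -> subform phi (Fimp psi chi)
| sub_neg phi psi : subform phi psi -> subform phi (Fneg psi)
| sub_box phi C psi : subform phi psi -> subform phi (Fbox C psi).

Inductive inCl (N : finType) (mu : form N) : form N -> Prop :=
| cl_sub phi : subform phi mu -> inCl mu phi
| cl_neg phi : inCl mu phi -> inCl mu (Fneg phi)
| cl_imp phi psi : inCl mu phi -> inCl mu psi -> inCl mu (Fimp phi psi).

Fixpoint eval (N : finType) (S : Type) (n : nat) (E : S -> eff N S n)
  (Val : S -> nat -> luk n) (u : S) (phi : form N) {struct phi} : luk n :=
  match phi with
  | F1 => lone n
  | Fvar p => Val u p
  | Fimp a b => limp (eval E Val u a) (eval E Val u b)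
  | Fneg a => lneg (eval E Val u a)
  | Fbox C a => E u C (fun v => eval E Val v a)
  end.

Definition bool_emb (n : nat) (b : luk 1) : luk n := if b == ord0 then lzero n else lone n.

(* Q is the set of classes |S|:
   cls is surjective and cls u = cls v iff u ==_Gamma v. *)
Definition is_Cl_filtration (N : finType) (S : Type) (n : nat) (mu : form N)
  (E : S -> eff N S n) (Val : S -> nat -> luk n)
  (Q : Type) (cls : S -> Q) (Estar : Q -> eff N Q n) (Valstar : Q -> nat -> luk n) :=
  [/\ (forall q : Q, exists u, cls u = q),
      (forall u v, cls u = cls v <->
          (forall phi, inCl mu phi -> eval E Val u phi = eval E Val v phi)),
      (forall u p, inCl mu (Fvar p) -> Valstar (cls u) p = Val u p) &
      (forall u C phi, inCl mu phi -> forall g : Q -> luk n,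
          (forall v, g (cls v) = eval E Val v phi) ->
          E u C (fun v => eval E Val v phi) = Estar (cls u) C g)].

Definition is_intermediate_Cl_filtration (N : finType) (S : Type) (n : nat)
  (mu : form N) (E : S -> eff N S n) (Val : S -> nat -> luk n)
  (Q : Type) (cls : S -> Q) (Estar : Q -> eff N Q n) (Valstar : Q -> nat -> luk n) :=
  [/\ is_Cl_filtration mu E Val cls Estar Valstar,
      (forall u (f : Q -> luk n) (C : {set N}), C != setT ->
         (exists phi, [/\ inCl mu phi,
                         (forall v, eval E Val v phi <= f (cls v))%N &
                         Estar (cls u) C f = E u C (fun v => eval E Val v phi)]) /\
         (forall phi, inCl mu phi -> (forall v, eval E Val v phi <= f (cls v))%N ->
            (E u C (fun v => eval E Val v phi) <= Estar (cls u) C f)%N)) &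
      (forall u (f : Q -> luk n),
         Estar (cls u) setT f = lneg (Estar (cls u) set0 (fun q => lneg (f q))))].

(* On a proper coalition C, E*(|u|)(C, f) is attained as E(u)(C, Val(-,phi)) for some
   phi in Cl(mu) below f; on N it is the dual of the empty coalition.  If f is {0,1}-valued then also
   phi (+) phi <= f, and homogeneity of E(u) gives E(phi) (+) E(phi) <= E(phi), forcing
   E(phi) into {0,1}: hence E*(|u|) maps crisp functions to crisp values and restricts
   to a Boolean effectivity function.  Superadditivity for a proper union C1 u C2
   comes from that of E(u) applied to phi /\ psi.  When C1 u C2 = N it becomes, by
   duality, the claim that the witnesses for f, g and ~(f /\ g) cannot all have
   value 1: their meet vanishes, so superadditivity and safety of E(u) would give 1 = 0. *)

From mathcomp Require Import all_boot zify.

Set Implicit Arguments.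
Unset Strict Implicit.
Unset Printing Implicit Defensive.

Section LukasiewiczArithmetic.
Variable m : nat.
Implicit Types x y : luk m.

Lemma val_lneg x : nat_of_ord (lneg x) = m - x.
Proof. rewrite /lneg inordK //; have := ltn_ord x; lia. Qed.

Lemma val_loplus x y : nat_of_ord (loplus x y) = minn (x + y) m.
Proof. rewrite /loplus inordK //; lia. Qed.

Lemma val_lodot x y : nat_of_ord (lodot x y) = x + y - m.
Proof. rewrite /lodot inordK //; have := ltn_ord x; have := ltn_ord y; lia. Qed.

Lemma val_limp x y : nat_of_ord (limp x y) = minn m (m - x + y).
Proof. rewrite /limp inordK //; lia. Qed.

Lemma val_lmin x y : nat_of_ord (lmin x y) = minn x y.
Proof. rewrite /lmin; case: ifP; lia. Qed.

Lemma lminC x y : lmin x y = lmin y x.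
Proof. by apply: val_inj; rewrite /= !val_lmin minnC. Qed.

Lemma lneg_lzero : lneg (lzero m) = lone m.
Proof. by apply: val_inj; rewrite /= val_lneg subn0. Qed.

Lemma lneg_lone : lneg (lone m) = lzero m.
Proof. by apply: val_inj; rewrite /= val_lneg subnn. Qed.

Definition crisp x := (nat_of_ord x == 0) || (nat_of_ord x == m).

Lemma crisp_lneg x : crisp x -> crisp (lneg x).
Proof. rewrite /crisp val_lneg; lia. Qed.

Lemma crisp_lmin x y : crisp x -> crisp y -> crisp (lmin x y).
Proof. rewrite /crisp val_lmin; lia. Qed.

End LukasiewiczArithmetic.

Lemma eff_ext (N : finType) (X : Type) (m : nat) (E : eff N X m) :
  outcome_monotonic E -> forall C (f g : X -> luk m), f =1 g -> E C f = E C g.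
Proof.
move=> E_mono C f g fg; apply/val_inj/eqP; rewrite eqn_leq.
by rewrite !E_mono // => x; rewrite fg.
Qed.

Lemma homogeneous_bool (N : finType) (X : Type) (E : eff N X 1) :
  outcome_monotonic E -> homogeneous E.
Proof.
have oplusxx (x : luk 1) : loplus x x = x.
  by apply: val_inj; rewrite /= val_loplus; have := ltn_ord x; lia.
have odotxx (x : luk 1) : lodot x x = x.
  by apply: val_inj; rewrite /= val_lodot; have := ltn_ord x; lia.
move=> E_mono C f; rewrite !oplusxx !odotxx.
by split; apply: eff_ext => // x; rewrite /= ?oplusxx ?odotxx.
Qed.

Section BoolEmbedding.
Variable n : nat.

Definition bool_proj (x : luk n) : luk 1 := if nat_of_ord x == 0 then lzero 1 else lone 1.

Lemma bool_emb_cases (b : luk 1) :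
  (nat_of_ord b = 0 /\ nat_of_ord (bool_emb n b) = 0) \/
  (nat_of_ord b = 1 /\ nat_of_ord (bool_emb n b) = n).
Proof. by case: b => [[|[|b]] ?]; [left | right |]. Qed.

Lemma bool_emb_crisp b : crisp (bool_emb n b).
Proof. rewrite /crisp; have := bool_emb_cases b; lia. Qed.

Lemma bool_emb_lneg b : bool_emb n (lneg b) = lneg (bool_emb n b).
Proof.
apply: val_inj; rewrite /= val_lneg; have := bool_emb_cases (lneg b).
have := bool_emb_cases b; rewrite val_lneg; lia.
Qed.

Lemma bool_emb_lmin a b : bool_emb n (lmin a b) = lmin (bool_emb n a) (bool_emb n b).
Proof.
apply: val_inj; rewrite /= val_lmin; have := bool_emb_cases (lmin a b).
have := bool_emb_cases a; have := bool_emb_cases b; rewrite val_lmin; lia.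
Qed.

Lemma bool_projK x : crisp x -> bool_emb n (bool_proj x) = x.
Proof.
rewrite /crisp /bool_proj => x_crisp; apply: val_inj.
by case: eqP => /= [-> // | x_ne0]; move: x_crisp; rewrite /bool_emb /=; lia.
Qed.

Hypothesis n_gt0 : 0 < n.

Lemma bool_emb_le a b : (bool_emb n a <= bool_emb n b) = (a <= b).
Proof. have := bool_emb_cases a; have := bool_emb_cases b; lia. Qed.

Lemma bool_emb_inj : injective (bool_emb n).
Proof. by move=> a b ab; apply/val_inj/eqP; rewrite eqn_leq -!bool_emb_le ab leqnn. Qed.

End BoolEmbedding.

Section BoolRestriction.
Variables (N : finType) (Q : Type) (n : nat) (n_gt0 : 0 < n) (F : eff N Q n).
Hypothesis F_mono : outcome_monotonic F.
Hypothesis F_crisp : forall C f, (forall q, crisp (f q)) -> crisp (F C f).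
Hypothesis F_setT : forall f, F setT f = lneg (F set0 (fun q => lneg (f q))).
Hypothesis F_superadditive_crisp : forall (C1 C2 : {set N}) (f g : Q -> luk n),
  [disjoint C1 & C2] ->
  (forall q, crisp (f q)) -> (forall q, crisp (g q)) ->
  lmin (F C1 f) (F C2 g) <= F (C1 :|: C2) (fun q => lmin (f q) (g q)).
Hypothesis F_liveness : liveness F.
Hypothesis F_safety : safety F.

Definition bool_restriction : eff N Q 1 :=
  fun C f => bool_proj (F C (fun q => bool_emb n (f q))).

Lemma bool_restrictionE C f :
  bool_emb n (bool_restriction C f) = F C (fun q => bool_emb n (f q)).
Proof. by apply: bool_projK; apply: F_crisp => q; apply: bool_emb_crisp. Qed.

Lemma bool_restriction_playable : playable bool_restriction.
Proof.
have R_mono : outcome_monotonic bool_restriction.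
  move=> C f g fg; rewrite -(bool_emb_le n_gt0) !bool_restrictionE.
  by apply: F_mono => q; rewrite bool_emb_le.
split=> //; split.
  move=> f; rewrite -(bool_emb_le n_gt0) bool_emb_lneg !bool_restrictionE F_setT.
  by rewrite (eff_ext F_mono _ (fun q => bool_emb_lneg n (f q))).
split.
  move=> C1 C2 f g C12; rewrite -(bool_emb_le n_gt0) bool_emb_lmin !bool_restrictionE.
  rewrite (eff_ext F_mono _ (fun q => bool_emb_lmin n (f q) (g q))).
  by apply: F_superadditive_crisp => // q; apply: bool_emb_crisp.
split; first exact: homogeneous_bool.
by split=> C; apply: (bool_emb_inj n_gt0); rewrite bool_restrictionE.
Qed.

End BoolRestriction.

(* [F] stands for E*(|u|), [e] for E(u), and [definable] for the set of truth
   functions Val(-,phi) with phi in Cl(mu). *)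
Section Envelope.
Variables (N : finType) (S Q : Type) (n : nat) (cls : S -> Q).
Variables (definable : (S -> luk n) -> Prop) (e : eff N S n) (F : eff N Q n).

Hypothesis e_mono : outcome_monotonic e.
Hypothesis e_superadditive : superadditive e.
Hypothesis e_homogeneous : homogeneous e.
Hypothesis e_liveness : liveness e.
Hypothesis e_safety : safety e.

Hypothesis definable_top : definable (fun _ => lone n).
Hypothesis definable_double :
  forall phi, definable phi -> definable (fun v => loplus (phi v) (phi v)).
Hypothesis definable_min : forall phi psi,
  definable phi -> definable psi -> definable (fun v => lmin (phi v) (psi v)).

Hypothesis F_witness : forall (C : {set N}) (f : Q -> luk n), C != setT -> exists phi,
  [/\ definable phi, forall v, phi v <= f (cls v) & F C f = e C phi].
Hypothesis F_upper : forall (C : {set N}) (f : Q -> luk n) phi, C != setT -> definable phi ->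
  (forall v, phi v <= f (cls v)) -> e C phi <= F C f.
Hypothesis F_setT : forall f, F setT f = lneg (F set0 (fun q => lneg (f q))).
Hypothesis set0_proper : set0 != setT :> {set N}.

Lemma envelope_mono_proper (C : {set N}) (f g : Q -> luk n) :
  C != setT -> (forall q, g q <= f q) -> F C g <= F C f.
Proof.
move=> CT gf; have [phi [phi_def phi_g ->]] := F_witness g CT.
by apply: F_upper => // v; apply: leq_trans (phi_g v) (gf _).
Qed.

Lemma envelope_mono : outcome_monotonic F.
Proof.
move=> C f g gf; have [-> | CT] := eqVneq C setT; last exact: envelope_mono_proper.
rewrite !F_setT !val_lneg leq_sub2l // envelope_mono_proper // => q.
by rewrite !val_lneg leq_sub2l.
Qed.

Lemma envelope_crisp_proper (C : {set N}) (f : Q -> luk n) :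
  C != setT -> (forall q, crisp (f q)) -> crisp (F C f).
Proof.
move=> CT f_crisp; have [phi [phi_def phi_f F_phi]] := F_witness f CT.
have : e C (fun v => loplus (phi v) (phi v)) <= F C f.
  apply: F_upper => // [|v]; first exact: definable_double.
  rewrite val_loplus; have := phi_f v; have := f_crisp (cls v); rewrite /crisp; lia.
rewrite (proj1 (e_homogeneous C phi)) -F_phi val_loplus /crisp.
have := ltn_ord (F C f); lia.
Qed.

Lemma envelope_crisp (C : {set N}) (f : Q -> luk n) : (forall q, crisp (f q)) -> crisp (F C f).
Proof.
move=> f_crisp; have [-> | CT] := eqVneq C setT; last exact: envelope_crisp_proper.
by rewrite F_setT; apply/crisp_lneg/envelope_crisp_proper => // q; apply: crisp_lneg.
Qed.

Lemma envelope_safety_proper (C : {set N}) : C != setT -> F C (fun _ => lzero n) = lzero n.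
Proof.
move=> CT; have [phi [_ phi0 ->]] := F_witness (fun _ => lzero n) CT.
have := e_mono C phi0; rewrite e_safety leqn0 => /eqP phi_0.
exact: val_inj.
Qed.

Lemma envelope_liveness_proper (C : {set N}) : C != setT -> F C (fun _ => lone n) = lone n.
Proof.
move=> CT; have := F_upper (f := fun _ => lone n) CT definable_top (fun v => leqnn _).
rewrite e_liveness => n_le; apply/val_inj/eqP.
by rewrite eqn_leq n_le -ltnS ltn_ord.
Qed.

Lemma envelope_safety : safety F.
Proof.
move=> C; have [-> | CT] := eqVneq C setT; last exact: envelope_safety_proper.
by rewrite F_setT lneg_lzero envelope_liveness_proper // lneg_lone.
Qed.

Lemma envelope_liveness : liveness F.
Proof.
move=> C; have [-> | CT] := eqVneq C setT; last exact: envelope_liveness_proper.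
by rewrite F_setT lneg_lone envelope_safety_proper // lneg_lzero.
Qed.

Lemma envelope_superadditive_proper (C1 C2 : {set N}) (f g : Q -> luk n) :
  C1 :|: C2 != setT -> [disjoint C1 & C2] ->
  lmin (F C1 f) (F C2 g) <= F (C1 :|: C2) (fun q => lmin (f q) (g q)).
Proof.
move=> C12T C12.
have C1T : C1 != setT by apply: contra_neq C12T => ->; rewrite setTU.
have C2T : C2 != setT by apply: contra_neq C12T => ->; rewrite setUT.
have [phi [phi_def phi_f ->]] := F_witness f C1T.
have [psi [psi_def psi_g ->]] := F_witness g C2T.
apply: leq_trans (e_superadditive _ _ C12) _.
apply: F_upper => // [|v]; first exact: definable_min.
by rewrite !val_lmin; have := phi_f v; have := psi_g v; lia.
Qed.

Lemma envelope_disjoint_supports (C1 C2 : {set N}) (f g : Q -> luk n) :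
  C1 != setT -> C2 != setT -> [disjoint C1 & C2] ->
  (forall q, minn (f q) (g q) = 0) -> minn (F C1 f) (F C2 g) = 0.
Proof.
move=> C1T C2T C12 fg0.
have [phi [_ phi_f ->]] := F_witness f C1T.
have [psi [_ psi_g ->]] := F_witness g C2T.
have phi_psi0 v : lmin (phi v) (psi v) <= lzero n.
  by rewrite val_lmin /=; have := phi_f v; have := psi_g v; have := fg0 (cls v); lia.
have := leq_trans (e_superadditive _ _ C12) (e_mono _ phi_psi0).
by rewrite e_safety val_lmin /=; lia.
Qed.

Lemma envelope_superadditive_cover (C1 C2 : {set N}) (f g : Q -> luk n) :
  C1 != setT -> C2 != setT -> C1 :|: C2 = setT -> [disjoint C1 & C2] ->
  (forall q, crisp (f q)) -> (forall q, crisp (g q)) ->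
  lmin (F C1 f) (F C2 g) <= F setT (fun q => lmin (f q) (g q)).
Proof.
move=> C1T C2T C12T C12 f_crisp g_crisp; rewrite F_setT.
set h := fun q => lneg _.
(* f /\ h /\ g = 0, so [F set0 h] = 1 would contradict [envelope_disjoint_supports]. *)
have h_crisp q : crisp (h q) by apply/crisp_lneg/crisp_lmin.
have := @envelope_superadditive_proper C1 set0 f h.
rewrite setU0 disjoint_sym -setI_eq0 set0I => /(_ C1T (eqxx _)) fh_le.
have := @envelope_disjoint_supports C1 C2 (fun q => lmin (f q) (h q)) g C1T C2T C12.
have fhg0 q : minn (lmin (f q) (h q)) (g q) = 0.
  by move: (f_crisp q) (g_crisp q); rewrite /h !val_lmin val_lneg val_lmin /crisp; lia.
move=> /(_ fhg0); move: fh_le; rewrite !val_lmin val_lneg.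
move: (envelope_crisp C1 f_crisp) (envelope_crisp C2 g_crisp).
move: (envelope_crisp set0 h_crisp); rewrite /crisp; lia.
Qed.

Lemma envelope_superadditive_setT_set0 (f g : Q -> luk n) :
  (forall q, crisp (f q)) -> (forall q, crisp (g q)) ->
  lmin (F setT f) (F set0 g) <= F setT (fun q => lmin (f q) (g q)).
Proof.
move=> f_crisp g_crisp; rewrite !F_setT.
set h := fun q => lneg (lmin _ _).
have := @envelope_superadditive_proper set0 set0 g h.
rewrite setU0 -setI_eq0 set0I => /(_ set0_proper (eqxx _)) gh_le.
have gh_nf : F set0 (fun q => lmin (g q) (h q)) <= F set0 (fun q => lneg (f q)).
  apply: envelope_mono => q; move: (f_crisp q) (g_crisp q).
  by rewrite /h !val_lmin !val_lneg val_lmin /crisp; lia.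
move: (leq_trans gh_le gh_nf); rewrite !val_lmin !val_lneg.
have h_crisp q : crisp (h q) by apply/crisp_lneg/crisp_lmin.
move: (envelope_crisp set0 g_crisp) (envelope_crisp set0 h_crisp); rewrite /crisp; lia.
Qed.

Lemma envelope_superadditive_crisp (C1 C2 : {set N}) (f g : Q -> luk n) :
  [disjoint C1 & C2] -> (forall q, crisp (f q)) -> (forall q, crisp (g q)) ->
  lmin (F C1 f) (F C2 g) <= F (C1 :|: C2) (fun q => lmin (f q) (g q)).
Proof.
move=> C12 f_crisp g_crisp.
have [C12T | C12T] := eqVneq (C1 :|: C2) setT; last exact: envelope_superadditive_proper.
have [C1T | C1T] := eqVneq C1 setT.
  move/disjoint_setI0: C12; rewrite C12T C1T setTI => ->.
  exact: envelope_superadditive_setT_set0.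
have [C2T | C2T] := eqVneq C2 setT.
  move/disjoint_setI0: C12; rewrite C12T C2T setIT => ->.
  rewrite lminC (eff_ext envelope_mono _ (fun q => lminC (f q) (g q))).
  exact: envelope_superadditive_setT_set0.
by rewrite C12T; apply: envelope_superadditive_cover.
Qed.

Lemma envelope_bool_restriction : 0 < n -> exists Eb : eff N Q 1,
  (forall C f, bool_emb n (Eb C f) = F C (fun q => bool_emb n (f q))) /\ playable Eb.
Proof.
move=> n_gt0; exists (bool_restriction F); split.
  by apply: bool_restrictionE; apply: envelope_crisp.
apply: bool_restriction_playable => //.
- exact: envelope_mono.
- exact: envelope_crisp.
- exact: envelope_superadditive_crisp.
- exact: envelope_liveness.
- exact: envelope_safety.
Qed.

End Envelope.

Section ClosureDefinable.
Variables (N : finType) (S : Type) (n : nat) (mu : form N).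
Variables (E : S -> eff N S n) (Val : S -> nat -> luk n).

(* The paper's abbreviation phi /\ psi = phi (.) (phi -> psi). *)
Definition Fand (phi psi : form N) : form N := Fneg (Fimp phi (Fneg (Fimp phi psi))).

Definition cl_definable (f : S -> luk n) : Prop :=
  exists2 phi, inCl mu phi & f =1 (fun v => eval E Val v phi).

Lemma cl_definable_top : cl_definable (fun _ => lone n).
Proof.
exists (Fimp mu mu); first by apply: cl_imp; apply: cl_sub; constructor.
by move=> v; apply: val_inj; rewrite /= val_limp; have := ltn_ord (eval E Val v mu); lia.
Qed.

Lemma cl_definable_double f : cl_definable f -> cl_definable (fun v => loplus (f v) (f v)).
Proof.
case=> phi phi_cl f_phi; exists (Fimp (Fneg phi) phi); first exact/cl_imp/phi_cl/cl_neg.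
move=> v; apply: val_inj; rewrite /= val_loplus val_limp val_lneg f_phi.
have := ltn_ord (eval E Val v phi); lia.
Qed.

Lemma cl_definable_min f g :
  cl_definable f -> cl_definable g -> cl_definable (fun v => lmin (f v) (g v)).
Proof.
case=> phi phi_cl f_phi [psi psi_cl g_psi]; exists (Fand phi psi).
  by apply/cl_neg/cl_imp/cl_neg/cl_imp.
move=> v; apply: val_inj; rewrite /= val_lmin f_phi g_psi val_lneg !val_limp val_lneg val_limp.
have := ltn_ord (eval E Val v phi); have := ltn_ord (eval E Val v psi); lia.
Qed.

End ClosureDefinable.

Theorem mainTheorem8 (n : nat) (n_gt0 : (0 < n)%N) (N : finType) (N_ge2 : (2 <= #|N|)%N)
  (mu : form N) (S : Type) (S_ne : inhabited S)
  (E : S -> eff N S n) (Val : S -> nat -> luk n)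
  (Mplay : forall u, playable (E u))
  (Q : Type) (cls : S -> Q) (Estar : Q -> eff N Q n) (Valstar : Q -> nat -> luk n)
  (Hfilt : is_intermediate_Cl_filtration mu E Val cls Estar Valstar) :
  forall u : S, exists Eb : eff N Q 1,
    (forall (C : {set N}) (f : Q -> luk 1),
        bool_emb n (Eb C f) = Estar (cls u) C (fun q => bool_emb n (f q))) /\
    playable Eb.
Proof.
move=> u; have [_ Estar_proper Estar_setT] := Hfilt.
have [E_mono [_ [E_sup [E_hom [E_live E_safe]]]]] := Mplay u.
have set0_proper : set0 != setT :> {set N}.
  by apply/negP => /eqP set0T; move: N_ge2; rewrite -cardsT -set0T cards0.
apply: (@envelope_bool_restriction _ _ _ _ cls (cl_definable mu E Val) (E u)) => //.
- exact: cl_definable_top.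
- exact: cl_definable_double.
- exact: cl_definable_min.
- move=> C f CT; have [[phi [phi_cl phi_f ->]] _] := Estar_proper u f C CT.
  by exists (fun v => eval E Val v phi); split=> //; exists phi.
- move=> C f g CT [phi phi_cl g_phi] g_f; rewrite (eff_ext E_mono _ g_phi).
  by apply: (proj2 (Estar_proper u f C CT)) => // v; rewrite -g_phi.
Qed.
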